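(* Let $\mathbf X\in\mathbb R^{m\times n}$, let $\mathbf Y\in\mathbb R^{q\times n}$ satisfy $\mathbf Y^T\mathbf Y=\mathbf I_n$, and let $\lambda>0$. If $\widehat{\mathbf B}$ is the optimal solution of $\min_{\mathbf B\in\mathbb R^{m\times q}}\{\frac12\|\mathbf X-\mathbf B\mathbf Y\|_F^2+\lambda\|\mathbf B\|_*\}$ and $\widehat{\mathbf S}$ is the optimal solution of $\min_{\mathbf S\in\mathbb R^{m\times n}}\{\frac12\|\mathbf X-\mathbf S\|_F^2+\lambda\|\mathbf S\|_*\}$, then $\widehat{\mathbf S}=\widehat{\mathbf B}\mathbf Y$.
   Context: $\|\cdot\|_*$ is the nuclear norm (sum of singular values), $\|\cdot\|_F$ the Frobenius norm. *)

From HB Require Import structures.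
From mathcomp Require Import all_boot all_order all_algebra.
From mathcomp Require Import boolp classical_sets reals.
Set Implicit Arguments. Unset Strict Implicit. Unset Printing Implicit Defensive.
Import Order.TTheory GRing.Theory Num.Theory.
Local Open Scope ring_scope.

Definition frob_norm (R : realType) (m n : nat) (A : 'M[R]_(m, n)) : R :=
  Num.sqrt (\sum_(i < m) \sum_(j < n) A i j ^+ 2).

(* The eigenvalues (with multiplicity) of the symmetric PSD matrix A^T A:
   a sequence s with char_poly (A^T A) = prod_(r <- s) (X - r).  Such a
   sequence exists (spectral theorem) and is unique up to permutation;
   it is selected by classical choice. *)
Definition gram_eigenvalues (R : realType) (m n : nat) (A : 'M[R]_(m, n)) : seq R :=
  xget [::] (fun s : seq R => char_poly (A^T *m A) = \prod_(r <- s) ('X - r%:P)).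

(* Singular values of A: square roots of the eigenvalues of A^T A
   (the extra zero singular values do not affect the sum). *)
Definition singular_values (R : realType) (m n : nat) (A : 'M[R]_(m, n)) : seq R :=
  [seq Num.sqrt r | r <- gram_eigenvalues A].

Definition nuc_norm (R : realType) (m n : nat) (A : 'M[R]_(m, n)) : R :=
  \sum_(s <- singular_values A) s.

Definition is_minimizer (T : Type) (R : realType) (f : T -> R) (x : T) : Prop :=
  forall y : T, f x <= f y.

From HB Require Import structures.
From mathcomp Require Import all_boot all_order all_algebra.
From mathcomp Require Import boolp classical_sets reals.
From mathcomp Require Import complex.
From mathcomp Require Import ring lra.
Import Order.TTheory GRing.Theory Num.Theory.
Set Implicit Arguments. Unset Strict Implicit. Unset Printing Implicit Defensive.
Local Open Scope ring_scope.

(* The nuclear norm is dual to the operator norm: ||A||_* is the maximum of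
   <Q, A> over the contractions Q.  Hence it is convex, and it does not grow
   under right multiplication by M whenever M^T is a contraction; since
   Y^T Y = I, this applies to M = Y and to M = Y^T.  The objective
   f(S) = 1/2 ||X - S||_F^2 + lambda ||S||_* is then strictly convex, so Shat is
   its only minimiser, while, writing g for the objective in B,
   f(Bhat Y) <= g(Bhat) <= g(Shat Y^T) <= f(Shat) because Shat Y^T Y = Shat.
   The duality comes from a spectral decomposition of A^T A.  Over the reals
   it is extracted from the complex spectral theorem: the real and imaginary
   parts Pr, Pi of a unitary eigenbasis satisfy
   Pr Pr^T + Pi Pi^T = Pr^T Pr + Pi^T Pi = I, which is all the argument uses;
   the maximising Q is A (A^T A)^(-1/2), with the inverse taken on the range. *)

Section FrobeniusInnerProduct.
Variable R : realFieldType.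

Definition frob_dot m n (A B : 'M[R]_(m, n)) : R := \tr (A^T *m B).

Lemma frob_dotE m n (A B : 'M[R]_(m, n)) :
  frob_dot A B = \sum_i \sum_j A i j * B i j.
Proof.
rewrite /frob_dot /mxtrace exchange_big; apply: eq_bigr => j _; rewrite mxE.
by apply: eq_bigr => i _; rewrite mxE.
Qed.

Lemma frob_dotC m n (A B : 'M[R]_(m, n)) : frob_dot A B = frob_dot B A.
Proof. by rewrite /frob_dot -mxtrace_tr trmx_mul trmxK. Qed.

Lemma frob_dotDr m n (A B C : 'M[R]_(m, n)) :
  frob_dot A (B + C) = frob_dot A B + frob_dot A C.
Proof. by rewrite /frob_dot mulmxDr mxtraceD. Qed.

Lemma frob_dotNr m n (A B : 'M[R]_(m, n)) : frob_dot A (- B) = - frob_dot A B.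
Proof. by rewrite /frob_dot mulmxN linearN. Qed.

Lemma frob_dotZr m n (A B : 'M[R]_(m, n)) c : frob_dot A (c *: B) = c * frob_dot A B.
Proof. by rewrite /frob_dot -scalemxAr mxtraceZ. Qed.

Lemma frob_dotDl m n (A B C : 'M[R]_(m, n)) :
  frob_dot (A + B) C = frob_dot A C + frob_dot B C.
Proof. by rewrite ![frob_dot _ C]frob_dotC frob_dotDr. Qed.

Lemma frob_dotNl m n (A B : 'M[R]_(m, n)) : frob_dot (- A) B = - frob_dot A B.
Proof. by rewrite ![frob_dot _ B]frob_dotC frob_dotNr. Qed.

Lemma frob_dotZl m n (A B : 'M[R]_(m, n)) c : frob_dot (c *: A) B = c * frob_dot A B.
Proof. by rewrite ![frob_dot _ B]frob_dotC frob_dotZr. Qed.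

Lemma frob_dot_mulmxl m k n (M : 'M[R]_(m, k)) (A : 'M[R]_(k, n)) (B : 'M[R]_(m, n)) :
  frob_dot (M *m A) B = frob_dot A (M^T *m B).
Proof. by rewrite /frob_dot trmx_mul mulmxA. Qed.

Lemma frob_dot_mulmxr m k n (Q : 'M[R]_(m, n)) (A : 'M[R]_(m, k)) (M : 'M[R]_(k, n)) :
  frob_dot Q (A *m M) = frob_dot (Q *m M^T) A.
Proof. by rewrite /frob_dot trmx_mul trmxK mulmxA mxtrace_mulC mulmxA. Qed.

Lemma frob_dot_col m n (A B : 'M[R]_(m, n)) :
  frob_dot A B = \sum_j frob_dot (col j A) (col j B).
Proof.
rewrite frob_dotE exchange_big; apply: eq_bigr => j _.
by rewrite frob_dotE; apply: eq_bigr => i _; rewrite big_ord1 !mxE.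
Qed.

Lemma frob_dot_col_mx m n (M N : 'M[R]_(m, n)) i j :
  frob_dot (col i M) (col j N) = (M^T *m N) i j.
Proof. by rewrite frob_dotE mxE; apply: eq_bigr => k _; rewrite big_ord1 !mxE. Qed.

Lemma frob_dot_ge0 m n (A : 'M[R]_(m, n)) : 0 <= frob_dot A A.
Proof. by rewrite frob_dotE; do 2!apply: sumr_ge0 => ? _; rewrite -expr2 sqr_ge0. Qed.

Lemma frob_dot_eq0 m n (A : 'M[R]_(m, n)) : (frob_dot A A == 0) = (A == 0).
Proof.
apply/idP/eqP => [|->]; last by rewrite /frob_dot mulmx0 mxtrace0.
rewrite frob_dotE psumr_eq0 => [/allP A0|i _]; last first.
  by apply: sumr_ge0 => j _; rewrite -expr2 sqr_ge0.
apply/matrixP => i j; rewrite mxE; move/(_ i (mem_index_enum _)): A0.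
rewrite psumr_eq0 => [/allP/(_ j (mem_index_enum _))|l _]; last by rewrite -expr2 sqr_ge0.
by rewrite -expr2 sqrf_eq0 => /eqP.
Qed.

Lemma frob_dot_parallelogram m n (A B : 'M[R]_(m, n)) :
  frob_dot (A + B) (A + B) + frob_dot (A - B) (A - B) =
    2 * (frob_dot A A + frob_dot B B).
Proof.
rewrite !(frob_dotDl, frob_dotDr, frob_dotNl, frob_dotNr) [frob_dot B A]frob_dotC.
ring.
Qed.

Lemma frob_dot_le_scaled m n (A B : 'M[R]_(m, n)) t :
  2 * t * frob_dot A B <= t ^+ 2 * frob_dot A A + frob_dot B B.
Proof.
have := frob_dot_ge0 (t *: A - B).
rewrite !(frob_dotDl, frob_dotDr, frob_dotNl, frob_dotNr, frob_dotZl, frob_dotZr).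
by rewrite [frob_dot B A]frob_dotC; lra.
Qed.

Lemma frob_dot_diag_le n (y : 'cV[R]_n) (f : 'rV[R]_n) :
  (forall i, 0 <= f 0 i <= 1) -> frob_dot y (diag_mx f *m y) <= frob_dot y y.
Proof.
move=> f01; rewrite !frob_dotE; apply: ler_sum => i _; rewrite !big_ord1 mul_diag_mx mxE.
by have /andP[f0 f1] := f01 i; rewrite mulrCA; nra.
Qed.

Definition mx_contraction m n (Q : 'M[R]_(m, n)) :=
  forall x : 'cV[R]_n, frob_dot (Q *m x) (Q *m x) <= frob_dot x x.

Lemma mx_contraction_isometry q n (Y : 'M[R]_(q, n)) :
  Y^T *m Y = 1%:M -> mx_contraction Y.
Proof. by move=> YtY x; rewrite frob_dot_mulmxl mulmxA YtY mul1mx. Qed.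

Lemma mx_contraction_tr_isometry q n (Y : 'M[R]_(q, n)) :
  Y^T *m Y = 1%:M -> mx_contraction Y^T.
Proof.
move=> YtY x; set z := Y^T *m x.
have Yz_x : frob_dot (Y *m z) x = frob_dot z z by rewrite frob_dot_mulmxl.
have Yz_Yz : frob_dot (Y *m z) (Y *m z) = frob_dot z z.
  by rewrite frob_dot_mulmxl mulmxA YtY mul1mx.
have := frob_dot_ge0 (x - Y *m z).
rewrite frob_dotDl !frob_dotDr !frob_dotNl !frob_dotNr [frob_dot x (Y *m z)]frob_dotC.
by rewrite Yz_x Yz_Yz; lra.
Qed.

End FrobeniusInnerProduct.

Lemma frob_dot_le_sqrt_mul (R : rcfType) m n (u w : 'M[R]_(m, n)) s c :
  frob_dot u u <= s -> frob_dot w w = c * s -> 0 <= c ->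
  frob_dot u w <= Num.sqrt c * s.
Proof.
move=> us wcs c0; have [c_eq0|c_neq0] := eqVneq c 0.
  move: wcs; rewrite c_eq0 mul0r => /eqP; rewrite frob_dot_eq0 => /eqP ->.
  by rewrite sqrtr0 mul0r frob_dotC /frob_dot trmx0 mul0mx linear0.
have t0 : 0 < Num.sqrt c by rewrite sqrtr_gt0 lt_def c_neq0.
have := frob_dot_le_scaled u w (Num.sqrt c); rewrite sqr_sqrtr // wcs.
have : c * frob_dot u u <= c * s by rewrite ler_wpM2l.
by rewrite -[c in c * s](sqr_sqrtr c0); nra.
Qed.

Lemma comm_diag_mx_map (R : idomainType) n (M : 'M[R]_n) (d : 'rV[R]_n) (f : R -> R) :
  M *m diag_mx d = diag_mx d *m M ->
  M *m diag_mx (map_mx f d) = diag_mx (map_mx f d) *m M.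
Proof.
move=> /matrixP Md; apply/matrixP => j k; move: (Md j k).
rewrite !mul_mx_diag !mul_diag_mx !mxE.
have [-> _|djk] := eqVneq (d 0 j) (d 0 k); first exact: mulrC.
move=> /eqP; rewrite mulrC -subr_eq0 -mulrBl mulf_eq0 subr_eq0 eq_sym (negPf djk).
by move=> /eqP ->; rewrite mulr0 mul0r.
Qed.

Lemma char_poly_similar (F : fieldType) n (P D : 'M[F]_n) : P \in unitmx ->
  char_poly (invmx P *m D *m P) = char_poly D.
Proof.
move=> Pu; rewrite /char_poly; pose P' := map_mx polyC P.
have P'u : P' \in unitmx by rewrite map_unitmx.
have -> : char_poly_mx (invmx P *m D *m P) = invmx P' *m char_poly_mx D *m P'.
  rewrite /char_poly_mx !map_mxM map_invmx mulmxBr mulmxBl.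
  by congr (_ - _); rewrite scalar_mxC -mulmxA mulVmx ?mulmx1.
by rewrite !det_mulmx mulrC mulrA -det_mulmx mulmxV // det1 mul1r.
Qed.

Section RealSpectralFrame.
Local Open Scope sesquilinear_scope.
Variable R : rcfType.
Local Notation C := (R[i]).
Local Notation Remx M := (map_mx (@complex.Re R) M).
Local Notation Immx M := (map_mx (@complex.Im R) M).
Local Notation realmx M := (map_mx (real_complex R) M).

Lemma Remx_mul m k n (A : 'M[C]_(m, k)) (B : 'M[C]_(k, n)) :
  Remx (A *m B) = Remx A *m Remx B - Immx A *m Immx B.
Proof.
apply/matrixP => i j; rewrite !mxE raddf_sum -sumrB; apply: eq_bigr => l _.
by rewrite !mxE; case: (A i l) => a b; case: (B l j).
Qed.

Lemma Immx_mul m k n (A : 'M[C]_(m, k)) (B : 'M[C]_(k, n)) :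
  Immx (A *m B) = Remx A *m Immx B + Immx A *m Remx B.
Proof.
apply/matrixP => i j; rewrite !mxE raddf_sum -big_split; apply: eq_bigr => l _.
by rewrite !mxE; case: (A i l) => a b; case: (B l j).
Qed.

Lemma Remx_trC m n (A : 'M[C]_(m, n)) : Remx (A ^t*) = (Remx A)^T.
Proof. by apply/matrixP => i j; rewrite !mxE; case: (A j i). Qed.

Lemma Immx_trC m n (A : 'M[C]_(m, n)) : Immx (A ^t*) = - (Immx A)^T.
Proof. by apply/matrixP => i j; rewrite !mxE; case: (A j i). Qed.

Lemma Remx_real m n (A : 'M[R]_(m, n)) : Remx (realmx A) = A.
Proof. by apply/matrixP => i j; rewrite !mxE. Qed.

Lemma Immx_real m n (A : 'M[R]_(m, n)) : Immx (realmx A) = 0.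
Proof. by apply/matrixP => i j; rewrite !mxE. Qed.

Lemma sym_eigenframe n (G : 'M[R]_n) : G^T = G ->
  exists Pr Pi : 'M[R]_n, exists d : 'rV[R]_n,
  [/\ G *m Pr = Pr *m diag_mx d, G *m Pi = Pi *m diag_mx d,
      Pr *m Pr^T + Pi *m Pi^T = 1%:M, Pr^T *m Pr + Pi^T *m Pi = 1%:M &
      char_poly G = \prod_(i < n) ('X - (d 0 i)%:P)].
Proof.
move=> G_sym; pose Gc := realmx G.
have Gc_herm : Gc \is hermsymmx.
  apply/is_hermitianmxP; rewrite expr0 scale1r; apply/matrixP => i j.
  by rewrite !mxE -[in LHS]G_sym mxE; apply/esym/conjc_real.
set P := spectralmx Gc; set dc := spectral_diag Gc.
have GcP : Gc = invmx P *m diag_mx dc *m P.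
  exact/orthomx_spectralP/hermitian_normalmx.
have P_unitary : P \is unitarymx by exact: spectral_unitarymx.
have [d dcE] : exists d, dc = realmx d.
  exists (Remx dc); apply/matrixP => i j; rewrite !mxE.
  have := mxOverP (hermitian_spectral_diag_real Gc_herm) i j.
  by case: (dc i j) => a b; rewrite complex_real => /eqP ->.
set W := P ^t*.
have WtW : W ^t* *m W = realmx 1%:M by rewrite trmxCK map_mx1; apply/unitarymxP.
have WWt : W *m W ^t* = realmx 1%:M.
  by rewrite trmxCK map_mx1 /W -invmx_unitary // mulVmx // unitarymx_unit.
have GcW : Gc *m W = W *m realmx (diag_mx d).
  rewrite {1}GcP invmx_unitary // -!mulmxA -{2}[P]trmxCK -/W WtW map_mx1 mulmx1.
  by rewrite dcE map_diag_mx.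
clearbody W; exists (Remx W), (Immx W), d; split.
- have := congr1 (fun M => Remx M) GcW.
  by rewrite !Remx_mul !Remx_real !Immx_real mul0mx mulmx0 !subr0.
- have := congr1 (fun M => Immx M) GcW.
  by rewrite !Immx_mul !Remx_real !Immx_real mul0mx mulmx0 add0r addr0.
- have := congr1 (fun M => Remx M) WWt.
  by rewrite Remx_mul Remx_trC Immx_trC Remx_real mulmxN opprK.
- have := congr1 (fun M => Remx M) WtW.
  by rewrite Remx_mul Remx_trC Immx_trC Remx_real mulNmx opprK.
apply: (@map_poly_inj _ _ (real_complex R)).
rewrite map_char_poly -/Gc GcP char_poly_similar ?unitarymx_unit //.
rewrite char_poly_trig ?diag_mx_is_trig // rmorph_prod; apply: eq_bigr => i _.
by rewrite /= map_polyXsubC dcE !mxE eqxx mulr1n.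
Qed.

End RealSpectralFrame.

Section EigenFrameDuality.
Variables (R : rcfType) (m n : nat) (A : 'M[R]_(m, n)) (Pr Pi : 'M[R]_n) (d : 'rV[R]_n).
Let G := A^T *m A.
Hypotheses (GPr : G *m Pr = Pr *m diag_mx d) (GPi : G *m Pi = Pi *m diag_mx d)
  (frame_tight : Pr *m Pr^T + Pi *m Pi^T = 1%:M)
  (frame_dual : Pr^T *m Pr + Pi^T *m Pi = 1%:M).

Lemma eigen_col_norm (X : 'M[R]_n) i : G *m X = X *m diag_mx d ->
  frob_dot (col i (A *m X)) (col i (A *m X)) = d 0 i * frob_dot (col i X) (col i X).
Proof.
move=> GX; rewrite !frob_dot_col_mx trmx_mul -mulmxA (mulmxA A^T) GX mulmxA.
by rewrite mul_mx_diag mxE mulrC.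
Qed.

Lemma frame_col_norm i :
  frob_dot (col i Pr) (col i Pr) + frob_dot (col i Pi) (col i Pi) = 1.
Proof.
have /= := congr1 (fun M : 'M[R]_n => M i i) frame_dual.
by rewrite !frob_dot_col_mx [in RHS]mxE eqxx mxE.
Qed.

Lemma eigen_ge0 i : 0 <= d 0 i.
Proof.
rewrite -[d 0 i]mulr1 -(frame_col_norm i) mulrDr -!eigen_col_norm //.
by rewrite addr_ge0 ?frob_dot_ge0.
Qed.

Lemma frob_dot_eigen_le (Q : 'M[R]_(m, n)) (X : 'M[R]_n) :
  mx_contraction Q -> G *m X = X *m diag_mx d ->
  frob_dot (Q *m X) (A *m X) <= \sum_i Num.sqrt (d 0 i) * frob_dot (col i X) (col i X).
Proof.
move=> Q_contr GX; rewrite frob_dot_col; apply: ler_sum => i _.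
apply: frob_dot_le_sqrt_mul; rewrite ?eigen_col_norm ?eigen_ge0 //.
by rewrite !colE -mulmxA; apply: Q_contr.
Qed.

Lemma frob_dot_le_sum_sqrt (Q : 'M[R]_(m, n)) :
  mx_contraction Q -> frob_dot Q A <= \sum_i Num.sqrt (d 0 i).
Proof.
move=> Q_contr.
have -> : frob_dot Q A = frob_dot (Q *m Pr) (A *m Pr) + frob_dot (Q *m Pi) (A *m Pi).
  by rewrite !frob_dot_mulmxr -frob_dotDl -!mulmxA -mulmxDr frame_tight mulmx1.
under eq_bigr => i _ do rewrite -[Num.sqrt _]mulr1 -(frame_col_norm i) mulrDr.
by rewrite big_split lerD ?frob_dot_eigen_le.
Qed.

Definition frame_fun (f : R -> R) :=
  Pr *m diag_mx (map_mx f d) *m Pr^T + Pi *m diag_mx (map_mx f d) *m Pi^T.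

Lemma frame_fun_sym f : (frame_fun f)^T = frame_fun f.
Proof. by rewrite linearD /= !trmx_mul !trmxK tr_diag_mx !mulmxA. Qed.

Lemma eigen_trmx (X : 'M[R]_n) :
  G *m X = X *m diag_mx d -> X^T *m G = diag_mx d *m X^T.
Proof. by move=> GX; apply: trmx_inj; rewrite !trmx_mul !trmxK tr_diag_mx GX. Qed.

Lemma eigen_gram_comm (X Y : 'M[R]_n) :
  G *m X = X *m diag_mx d -> G *m Y = Y *m diag_mx d ->
  X^T *m Y *m diag_mx d = diag_mx d *m (X^T *m Y).
Proof. by move=> GX GY; rewrite -mulmxA -GY mulmxA eigen_trmx // mulmxA. Qed.

Lemma frame_fun_eigen f (X : 'M[R]_n) :
  G *m X = X *m diag_mx d -> frame_fun f *m X = X *m diag_mx (map_mx f d).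
Proof.
move=> GX; rewrite /frame_fun mulmxDl -!mulmxA.
rewrite -!(comm_diag_mx_map _ (eigen_gram_comm _ GX)) //.
by rewrite !mulmxA -!mulmxDl frame_tight mul1mx.
Qed.

Lemma frob_dot_sandwich k (P : 'M[R]_(n, k)) (M : 'M[R]_k) (x : 'cV[R]_n) :
  frob_dot x (P *m M *m P^T *m x) = frob_dot (P^T *m x) (M *m (P^T *m x)).
Proof. by rewrite frob_dotC -!mulmxA frob_dot_mulmxl frob_dotC. Qed.

(* Since [0^-1 = 0], [frame_fun inv_sqrt] is the pseudo-inverse of the square
   root of [G]. *)
Local Notation inv_sqrt := (fun t : R => (Num.sqrt t)^-1).

Lemma frame_inv_sqrt_contraction : mx_contraction (A *m frame_fun inv_sqrt).
Proof.
set H := frame_fun _; set e := map_mx inv_sqrt d.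
have HPr := frame_fun_eigen inv_sqrt GPr; have HPi := frame_fun_eigen inv_sqrt GPi.
pose f := \row_i (e 0 i * d 0 i * e 0 i).
have f01 i : 0 <= f 0 i <= 1.
  rewrite !mxE; set s := Num.sqrt (d 0 i).
  rewrite -[d 0 i](sqr_sqrtr (eigen_ge0 i)) -/s expr2.
  have [->|s_neq0] := eqVneq s 0; first by rewrite invr0 !mul0r lexx ler01.
  by rewrite mulrA mulVf // mul1r mulfV // lexx ler01.
have EDE : diag_mx e *m diag_mx d *m diag_mx e = diag_mx f.
  apply/matrixP => i j; rewrite mul_mx_diag mul_diag_mx !mxE.
  by case: eqP => [->|_]; rewrite ?mulr0 ?mul0r ?mulr1n.
have HGH : H *m G *m H = Pr *m diag_mx f *m Pr^T + Pi *m diag_mx f *m Pi^T.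
  rewrite mulmxDr -!(mulmxA H G) !(mulmxA G) GPr GPi !(mulmxA H) HPr HPi.
  by rewrite -!(mulmxA Pr) -!(mulmxA Pi) EDE !mulmxA.
move=> x; rewrite -mulmxA !frob_dot_mulmxl frame_fun_sym -/H.
rewrite (mulmxA A^T) (mulmxA H) (mulmxA (H *m G)).
rewrite HGH mulmxDl frob_dotDr !frob_dot_sandwich.
apply: le_trans (lerD (frob_dot_diag_le _ f01) (frob_dot_diag_le _ f01)) _.
by rewrite !frob_dot_mulmxl !trmxK -frob_dotDr !mulmxA -mulmxDl frame_tight mul1mx.
Qed.

Lemma frob_dot_frame_inv_sqrt :
  frob_dot (A *m frame_fun inv_sqrt) A = \sum_i Num.sqrt (d 0 i).
Proof.
rewrite frob_dot_mulmxl -/G /frob_dot frame_fun_sym /frame_fun mulmxDl mxtraceD.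
rewrite -!mulmxA (eigen_trmx GPr) (eigen_trmx GPi).
rewrite [\tr (Pr *m _)]mxtrace_mulC [\tr (Pi *m _)]mxtrace_mulC -!mulmxA -mxtraceD.
rewrite -!mulmxDr frame_dual mulmx1 mul_mx_diag /mxtrace; apply: eq_bigr => i _.
rewrite !mxE eqxx mulr1n -{2}[d 0 i](sqr_sqrtr (eigen_ge0 i)) expr2 mulrA.
have [->|s_neq0] := eqVneq (Num.sqrt (d 0 i)) 0; first by rewrite mulr0.
by rewrite mulVf ?mul1r.
Qed.

End EigenFrameDuality.

Section NuclearNorm.
Variable R : realType.

Lemma nuc_norm_eigenE m n (A : 'M[R]_(m, n)) (d : 'rV[R]_n) :
  char_poly (A^T *m A) = \prod_(i < n) ('X - (d 0 i)%:P) ->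
  nuc_norm A = \sum_i Num.sqrt (d 0 i).
Proof.
move=> cpA; set s := [seq d 0 i | i <- enum 'I_n].
have cp_s : char_poly (A^T *m A) = \prod_(r <- s) ('X - r%:P) by rewrite big_map big_enum.
have cp_gram : char_poly (A^T *m A) = \prod_(r <- gram_eigenvalues A) ('X - r%:P).
  exact: (@xgetI _ [::] (fun s => char_poly (A^T *m A) = \prod_(r <- s) ('X - r%:P)) _ cp_s).
have /prod_XsubC_eq eig_perm :
    \prod_(r <- gram_eigenvalues A) ('X - r%:P) = \prod_(r <- s) ('X - r%:P).
  by rewrite -cp_gram.
by rewrite /nuc_norm /singular_values big_map (perm_big _ eig_perm) big_map big_enum.
Qed.

Lemma nuc_norm_eigenframe m n (A : 'M[R]_(m, n)) :
  exists Pr Pi : 'M[R]_n, exists d : 'rV[R]_n,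
  [/\ A^T *m A *m Pr = Pr *m diag_mx d, A^T *m A *m Pi = Pi *m diag_mx d,
      Pr *m Pr^T + Pi *m Pi^T = 1%:M, Pr^T *m Pr + Pi^T *m Pi = 1%:M &
      nuc_norm A = \sum_i Num.sqrt (d 0 i)].
Proof.
have G_sym : (A^T *m A)^T = A^T *m A by rewrite trmx_mul trmxK.
have [Pr [Pi [d [GPr GPi tight dual cp]]]] := sym_eigenframe G_sym.
by exists Pr, Pi, d; rewrite (nuc_norm_eigenE cp).
Qed.

Lemma nuc_norm_ge_frob_dot m n (Q A : 'M[R]_(m, n)) :
  mx_contraction Q -> frob_dot Q A <= nuc_norm A.
Proof.
have [Pr [Pi [d [GPr GPi tight dual ->]]]] := nuc_norm_eigenframe A.
exact: (frob_dot_le_sum_sqrt GPr GPi).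
Qed.

Lemma nuc_norm_dual m n (A : 'M[R]_(m, n)) :
  exists2 Q : 'M[R]_(m, n), mx_contraction Q & frob_dot Q A = nuc_norm A.
Proof.
have [Pr [Pi [d [GPr GPi tight dual ->]]]] := nuc_norm_eigenframe A.
exists (A *m frame_fun Pr Pi d (fun t => (Num.sqrt t)^-1)).
  exact: (frame_inv_sqrt_contraction GPr GPi).
exact: (frob_dot_frame_inv_sqrt GPr GPi).
Qed.

Lemma nuc_norm_mulmxr_le m k n (A : 'M[R]_(m, k)) (M : 'M[R]_(k, n)) :
  mx_contraction M^T -> nuc_norm (A *m M) <= nuc_norm A.
Proof.
move=> M_contr; have [Q Q_contr <-] := nuc_norm_dual (A *m M).
rewrite frob_dot_mulmxr; apply: nuc_norm_ge_frob_dot => x.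
by rewrite -mulmxA; apply: le_trans (Q_contr _) (M_contr _).
Qed.

Lemma nuc_norm_sublinear m n a b (A B : 'M[R]_(m, n)) : 0 <= a -> 0 <= b ->
  nuc_norm (a *: A + b *: B) <= a * nuc_norm A + b * nuc_norm B.
Proof.
move=> a0 b0; have [Q Q_contr <-] := nuc_norm_dual (a *: A + b *: B).
by rewrite frob_dotDr !frob_dotZr lerD // ler_wpM2l // nuc_norm_ge_frob_dot.
Qed.

End NuclearNorm.

Section ProximalObjective.
Variable R : realType.

Lemma frob_norm_sqr m n (A : 'M[R]_(m, n)) : frob_norm A ^+ 2 = frob_dot A A.
Proof. by rewrite /frob_norm -frob_dotE sqr_sqrtr ?frob_dot_ge0. Qed.

Definition prox_objective m n (h : 'M[R]_(m, n) -> R) (X S : 'M[R]_(m, n)) :=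
  2^-1 * frob_dot (X - S) (X - S) + h S.

Lemma prox_objective_le_minimizer m n (h : 'M[R]_(m, n) -> R) (X Shat S : 'M[R]_(m, n)) :
  (forall A B, h (2^-1 *: (A + B)) <= 2^-1 * (h A + h B)) ->
  is_minimizer (prox_objective h X) Shat ->
  prox_objective h X S <= prox_objective h X Shat -> S = Shat.
Proof.
move=> h_midconvex Shat_min.
have := Shat_min (2^-1 *: (S + Shat)); have := h_midconvex S Shat.
rewrite /prox_objective.
have -> : X - 2^-1 *: (S + Shat) = 2^-1 *: ((X - S) + (X - Shat)).
  by rewrite addrACA -opprD scalerBr -mulr2n -scaler_nat scalerA mulVf ?pnatr_eq0 ?scale1r.
have := frob_dot_parallelogram (X - S) (X - Shat).
have -> : X - S - (X - Shat) = Shat - S by rewrite opprB addrC addrA subrK.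
have := frob_dot_ge0 (Shat - S).
rewrite frob_dotZl frob_dotZr => *.
have dist0 : frob_dot (Shat - S) (Shat - S) = 0 by lra.
by apply/eqP; rewrite eq_sym -subr_eq0 -frob_dot_eq0 dist0.
Qed.

End ProximalObjective.

Theorem proposition5 (R : realType) (m n q : nat)
  (X : 'M[R]_(m, n)) (Y : 'M[R]_(q, n)) (lambda : R)
  (HY : Y^T *m Y = 1%:M) (Hlambda : 0 < lambda)
  (Bhat : 'M[R]_(m, q)) (Shat : 'M[R]_(m, n))
  (HB : is_minimizer
          (fun B : 'M[R]_(m, q) =>
             2^-1 * frob_norm (X - B *m Y) ^+ 2 + lambda * nuc_norm B) Bhat)
  (HS : is_minimizer
          (fun S : 'M[R]_(m, n) =>
             2^-1 * frob_norm (X - S) ^+ 2 + lambda * nuc_norm S) Shat) :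
  Shat = Bhat *m Y.
Proof.
pose h (S : 'M[R]_(m, n)) := lambda * nuc_norm S.
have h_midconvex (A B : 'M[R]_(m, n)) : h (2^-1 *: (A + B)) <= 2^-1 * (h A + h B).
  rewrite /h scalerDr -mulrDr mulrCA mulrDr; apply: ler_wpM2l; first exact: ltW.
  by apply: nuc_norm_sublinear; rewrite invr_ge0 ler0n.
have Shat_min : is_minimizer (prox_objective h X) Shat.
  by move=> S; rewrite /prox_objective -!frob_norm_sqr; exact: HS.
symmetry; apply: (prox_objective_le_minimizer h_midconvex Shat_min).
apply: le_trans (le_trans (HB (Shat *m Y^T)) _).
  rewrite /prox_objective frob_norm_sqr lerD2l; apply: ler_wpM2l; first exact: ltW.
  exact/nuc_norm_mulmxr_le/mx_contraction_tr_isometry.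
rewrite -mulmxA HY mulmx1 /prox_objective frob_norm_sqr lerD2l.
apply: ler_wpM2l; first exact: ltW.
by apply/nuc_norm_mulmxr_le; rewrite trmxK; exact: mx_contraction_isometry.
Qed.
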